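(* The Skolem Conjecture holds if and only if the following statement (S') holds: (S') Let $b$ be a nonzero integer and let $\mathbf u=\langle u_n\rangle_{n\in\mathbb Z}$ be a simple rational LRBS taking values in $\mathbb Z[\frac1b]$. Then $\mathbf u$ has no integer zero if and only if there exist an integer $N\ge1$ and primes $p_1,\dots,p_t$ coprime to $b$ with the following property: for every $\ell\in\{0,\dots,N-1\}$ there is an $i$ such that the sequence $\langle u_{Nn+\ell}\rangle_{n\in\mathbb Z}$ has no $p_i$-adic zero.
   Context: A rational linear recurrent bi-sequence (LRBS) is a bi-infinite sequence $\langle u_n\rangle_{n\in\mathbb Z}$ of rationals satisfying $u_{n+d}=a_{d-1}u_{n+d-1}+\dots+a_0u_n$ for all $n\in\mathbb Z$, with rational $a_i$ and $a_0\neq0$. It is simple if the characteristic polynomial of its minimal-order recurrence has no repeated roots. An integer zero is an $n\in\mathbb Z$ with $u_n=0$. For a prime $p$ not dividing $b$ and a sequence $\langle w_n\rangle_{n\in\mathbb Z}$ with values in $\mathbb Z[\frac1b]$, a $p$-adic zero of $\mathbf w$ is an $x\in\mathbb Z_p$ for which there exist integers $n_1,n_2,\dots$ with $v_p(w_{n_r})\ge r$ and $n_r\equiv x \pmod{p^r\mathbb Z_p}$ for all $r\ge1$. Skolem Conjecture: for every nonzero integer $b$ and every simple rational LRBS $\mathbf u$ with values in $\mathbb Z[\frac1b]$, $\mathbf u$ has no integer zero if and only if there is an integer $m\ge2$ with $\gcd(b,m)=1$ such that $u_n\not\equiv0\pmod m$ for all $n\in\mathbb Z$. *)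

From mathcomp Require Import all_boot all_order all_algebra all_field.
Set Implicit Arguments. Unset Strict Implicit. Unset Printing Implicit Defensive.
Import Order.TTheory GRing.Theory Num.Theory.
Local Open Scope ring_scope.

(* A recurrence u_{n+d} = a_{d-1} u_{n+d-1} + ... + a_0 u_n for all n in Z,
   with d = size a and a_0 <> 0 (which forces d >= 1). *)
Definition is_rec (u : int -> rat) (a : seq rat) : Prop :=
  a`_0 != 0 /\
  forall n : int, u (n + (size a)%:Z) = \sum_(i < size a) a`_i * u (n + (i : nat)%:Z).

Definition LRBS (u : int -> rat) : Prop := exists a, is_rec u a.

Definition charpoly (a : seq rat) : {poly rat} :=
  'X^(size a) - \sum_(i < size a) a`_i *: 'X^i.

Definition no_repeated_roots (P : {poly rat}) : Prop :=
  forall z : algC, ~ (('X - z%:P) ^+ 2 %| map_poly (@ratr algC) P).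

Definition simple_LRBS (u : int -> rat) : Prop :=
  forall a, is_rec u a -> (forall a', is_rec u a' -> (size a <= size a')%N) ->
    no_repeated_roots (charpoly a).

Definition in_Zb (b : int) (x : rat) : Prop :=
  exists (m : int) (k : nat), x = m%:~R / (b%:~R ^+ k).

Definition values_in_Zb (b : int) (u : int -> rat) : Prop :=
  forall n, in_Zb b (u n).

Definition has_integer_zero (u : int -> rat) : Prop := exists n : int, u n = 0.

Definition zero_mod_Zb (b : int) (m : nat) (x : rat) : Prop :=
  exists y, in_Zb b y /\ x = m%:R * y.

Definition vp_ge (p r : nat) (x : rat) : Prop := ((p ^ r)%:Z %| numq x)%Z.

(* A p-adic integer x in Z_p, represented as a compatible sequence of
   integers c r (c r being a representative of x mod p^r). *)
Definition Zp_seq (p : nat) (c : nat -> int) : Prop :=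
  forall r : nat, ((p ^ r)%:Z %| c r.+1 - c r)%Z.

Definition has_padic_zero (p : nat) (w : int -> rat) : Prop :=
  exists c : nat -> int, Zp_seq p c /\
  exists n_ : nat -> int, forall r : nat, (0 < r)%N ->
    vp_ge p r (w (n_ r)) /\ ((p ^ r)%:Z %| n_ r - c r)%Z.

Definition Skolem_Conjecture : Prop :=
  forall (b : int) (u : int -> rat), b != 0 -> LRBS u -> simple_LRBS u ->
    values_in_Zb b u ->
    (~ has_integer_zero u <->
     exists m : nat, (2 <= m)%N /\ coprime `|b|%N m /\
       forall n : int, ~ zero_mod_Zb b m (u n)).

Definition S' : Prop :=
  forall (b : int) (u : int -> rat), b != 0 -> LRBS u -> simple_LRBS u ->
    values_in_Zb b u ->
    (~ has_integer_zero u <->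
     exists (N : nat) (ps : seq nat), (1 <= N)%N /\
       (forall p, p \in ps -> prime p /\ coprime p `|b|%N) /\
       forall l : nat, (l < N)%N ->
         exists2 p, p \in ps &
           ~ has_padic_zero p (fun n : int => u (N%:Z * n + l%:Z))).

From Stdlib Require Import Classical_Prop ClassicalEpsilon.
From mathcomp Require Import all_boot all_order all_algebra all_field.
From mathcomp Require Import zify ring.
Set Implicit Arguments. Unset Strict Implicit. Unset Printing Implicit Defensive.
Import Order.TTheory GRing.Theory Num.Theory.
Local Open Scope ring_scope.

(* Given a modulus m with u_n <> 0 mod m: a sequence without zeros has an invertible Hankel
   matrix H for its minimal recurrence, so two windows of u that are congruent mod p^E give
   sequences congruent mod p^E / det H; by pigeonhole some window repeats modulo every power
   of p, hence u is periodic modulo each prime power dividing m. With N a common period,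
   u_(Nn+l) = u_l mod p^(v_p m) for all n, and choosing p with p^(v_p m) not dividing u_l
   rules out a p-adic zero of the subsequence.
   Conversely, by compactness of Z_p (a Koenig-type argument) a subsequence without p-adic
   zero has bounded p-adic valuation, and a product of high powers of the p_i is a modulus. *)

Lemma common_upper_witness (P : nat -> nat -> Prop) J :
  (forall j s s', (s <= s')%N -> P j s -> P j s') ->
  (forall j, (j < J)%N -> exists s, P j s) -> exists S, forall j, (j < J)%N -> P j S.
Proof.
move=> P_up; elim: J => [|J IH] hJ; first by exists 0%N.
have [S HS] := IH (fun j hj => hJ j (ltnW hj)).
have [s Hs] := hJ J (ltnSn J).
exists (maxn S s) => j; rewrite ltnS leq_eqVlt => /predU1P [-> | hj].
  by apply: P_up Hs; apply: leq_maxr.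
by apply: P_up (HS j hj); apply: leq_maxl.
Qed.

Lemma common_multiple_witness (T : eqType) (s : seq T) (Q : T -> nat -> Prop) :
  (forall x P k, x \in s -> Q x P -> Q x (P * k)%N) ->
  (forall x, x \in s -> exists2 P, (0 < P)%N & Q x P) ->
  exists2 N, (0 < N)%N & forall x, x \in s -> Q x N.
Proof.
elim: s => [|y s IH] QM hs; first by exists 1%N.
have [N N0 HN] : exists2 N, (0 < N)%N & forall x, x \in s -> Q x N.
  by apply: IH => [x P k xs | x xs]; [apply: QM | apply: hs]; rewrite inE xs orbT.
have [P P0 HP] := hs y (mem_head y s).
exists (P * N)%N => [|x]; first by rewrite muln_gt0 P0.
rewrite inE => /predU1P [-> | xs]; first by apply: QM; rewrite ?mem_head.
by rewrite mulnC; apply: QM (HN x xs); rewrite inE xs orbT.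
Qed.

Lemma int_divn_decomp (n : int) (N : nat) : (0 < N)%N ->
  exists (q : int) (l : nat), (l < N)%N /\ n = N%:Z * q + l%:Z.
Proof.
move=> N0; have Nz : N%:Z != 0 by rewrite eqz_nat -lt0n.
have ge := modz_ge0 n Nz.
exists (n %/ N%:Z)%Z, `|(n %% N%:Z)%Z|%N; split.
  by rewrite -ltz_nat gez0_abs // ltz_pmod // ltz_nat.
by rewrite gez0_abs // mulrC -divz_eq.
Qed.

Definition p_integral (p : nat) (x : rat) : Prop :=
  exists (z s : int), ~~ (p %| `|s|)%N /\ x = z%:~R / s%:~R.

Definition p_multiple (p e : nat) (x : rat) : Prop :=
  exists2 y, p_integral p y & x = (p ^ e)%:R * y.

Lemma denq_dvd_of_intr_div x (z s : int) : s != 0 -> x = z%:~R / s%:~R ->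
  (`|denq x| %| `|s|)%N.
Proof.
move=> s0 ex.
have e1 : numq x * s = z * denq x.
  apply: (@intr_inj rat); rewrite !rmorphM /= numqE ex.
  have := denq_neq0 x; rewrite -(intr_eq0 rat) => d0.
  by field; rewrite intr_eq0.
have : (`|denq x| %| `|numq x| * `|s|)%N by rewrite -abszM e1 abszM dvdn_mull.
by rewrite Gauss_dvdr // coprime_sym coprime_num_den.
Qed.

Section PIntegral.
Variable p : nat.
Hypothesis p_prime : prime p.

Lemma intr_neq0_of_ndvd (s : int) : ~~ (p %| `|s|)%N -> s%:~R != 0 :> rat.
Proof. by apply: contraNneq => /eqP; rewrite intr_eq0 => /eqP ->; rewrite dvdn0. Qed.

Lemma ndvd_abszM (s t : int) :
  ~~ (p %| `|s|)%N -> ~~ (p %| `|t|)%N -> ~~ (p %| `|(s * t)%R|)%N.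
Proof. by move=> hs ht; rewrite abszM Euclid_dvdM // negb_or hs ht. Qed.

Lemma p_integral_int (z : int) : p_integral p z%:~R.
Proof.
exists z, 1; split; last by rewrite divr1.
by rewrite /= dvdn1; case: eqP p_prime => // ->.
Qed.

Lemma p_integral_nat (n : nat) : p_integral p n%:R.
Proof. by have := p_integral_int n; rewrite -pmulrn. Qed.

Lemma p_integralD x y : p_integral p x -> p_integral p y -> p_integral p (x + y).
Proof.
move=> [z1 [s1 [h1 ->]]] [z2 [s2 [h2 ->]]].
exists (z1 * s2 + z2 * s1), (s1 * s2); split; first exact: ndvd_abszM.
have := intr_neq0_of_ndvd h1; have := intr_neq0_of_ndvd h2 => n2 n1.
by rewrite !rmorphD !rmorphM /=; field; apply/andP.
Qed.

Lemma p_integralM x y : p_integral p x -> p_integral p y -> p_integral p (x * y).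
Proof.
move=> [z1 [s1 [h1 ->]]] [z2 [s2 [h2 ->]]].
exists (z1 * z2), (s1 * s2); split; first exact: ndvd_abszM.
have := intr_neq0_of_ndvd h1; have := intr_neq0_of_ndvd h2 => n2 n1.
by rewrite !rmorphM /=; field; apply/andP.
Qed.

Lemma p_integralN x : p_integral p x -> p_integral p (- x).
Proof. by move=> h; have := p_integralM (p_integral_int (-1)) h; rewrite mulN1r. Qed.

Lemma p_integral_sum (I : Type) (r : seq I) (P : pred I) (F : I -> rat) :
  (forall i, P i -> p_integral p (F i)) -> p_integral p (\sum_(i <- r | P i) F i).
Proof. by apply: big_ind; [exact: (p_integral_int 0) | exact: p_integralD]. Qed.

Lemma p_integral_prod (I : Type) (r : seq I) (P : pred I) (F : I -> rat) :
  (forall i, P i -> p_integral p (F i)) -> p_integral p (\prod_(i <- r | P i) F i).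
Proof. by apply: big_ind; [exact: (p_integral_int 1) | exact: p_integralM]. Qed.

Lemma p_integral_sign k : p_integral p ((-1) ^+ k).
Proof. by have := p_integral_int ((-1) ^+ k); rewrite rmorphXn rmorphN1. Qed.

Lemma p_integral_det n (A : 'M[rat]_n) :
  (forall i j, p_integral p (A i j)) -> p_integral p (\det A).
Proof.
move=> hA; apply: p_integral_sum => s _; apply: p_integralM; first exact: p_integral_sign.
by apply: p_integral_prod => i _.
Qed.

Lemma p_integral_adj n (A : 'M[rat]_n) :
  (forall i j, p_integral p (A i j)) -> forall i j, p_integral p (\adj A i j).
Proof.
move=> hA i j; rewrite mxE /cofactor; apply: p_integralM; first exact: p_integral_sign.
by apply: p_integral_det => k l; rewrite !mxE.
Qed.

Lemma p_integral_denq x : p_integral p x -> ~~ (p %| `|denq x|)%N.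
Proof.
move=> [z [s [hs ex]]].
have hd : (`|denq x| %| `|s|)%N.
  by apply: denq_dvd_of_intr_div ex; rewrite -(intr_eq0 rat) intr_neq0_of_ndvd.
by apply: contra hs => hp; apply: dvdn_trans hp hd.
Qed.

Lemma p_multiple0 e : p_multiple p e 0.
Proof. by exists 0; [exact: (p_integral_int 0) | rewrite mulr0]. Qed.

Lemma p_multipleD e x y : p_multiple p e x -> p_multiple p e y -> p_multiple p e (x + y).
Proof.
by move=> [a ha ->] [b hb ->]; exists (a + b); [exact: p_integralD | rewrite mulrDr].
Qed.

Lemma p_multipleN e x : p_multiple p e x -> p_multiple p e (- x).
Proof. by move=> [a ha ->]; exists (- a); [exact: p_integralN | rewrite mulrN]. Qed.

Lemma p_multipleB e x y : p_multiple p e x -> p_multiple p e y -> p_multiple p e (x - y).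
Proof. by move=> hx hy; apply/p_multipleD/p_multipleN. Qed.

Lemma p_multipleM e x y : p_multiple p e x -> p_integral p y -> p_multiple p e (x * y).
Proof. by move=> [a ha ->] hy; exists (a * y); [exact: p_integralM | rewrite mulrA]. Qed.

Lemma p_multiple_sum e (I : Type) (r : seq I) (P : pred I) (F : I -> rat) :
  (forall i, P i -> p_multiple p e (F i)) -> p_multiple p e (\sum_(i <- r | P i) F i).
Proof. by apply: big_ind; [exact: p_multiple0 | exact: p_multipleD]. Qed.

Lemma vp_ge_of_p_multiple e x : p_multiple p e x -> vp_ge p e x.
Proof.
move=> [y [z [s [hs ey]]] ex].
have s0 := intr_neq0_of_ndvd hs.
have e1 : numq x * s = (p ^ e)%:Z * z * denq x.
  apply: (@intr_inj rat); rewrite !rmorphM /= numqE ex ey.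
  rewrite -[X in _ = X * _ * _]pmulrn.
  by have := denq_neq0 x; rewrite -(intr_eq0 rat) => d0; field.
have : ((p ^ e)%:Z %| numq x * s)%Z by rewrite e1 -mulrA dvdz_mulr.
by rewrite Gauss_dvdzl // coprimezE /= coprimeXl // prime_coprime.
Qed.

Lemma p_multiple_of_vp_ge e x : p_integral p x -> vp_ge p e x -> p_multiple p e x.
Proof.
move=> hx /dvdzP [q eq]; exists (q%:~R / (denq x)%:~R).
  by exists q, (denq x); split=> //; apply: p_integral_denq.
rewrite -[LHS]divq_num_den eq rmorphM /= mulrA; congr (_ / _).
by rewrite mulrC -pmulrn.
Qed.

Lemma p_integral_residue E x : p_integral p x ->
  exists2 r : nat, (r < p ^ E)%N & p_multiple p E (x - r%:R).
Proof.
move=> [z [s [hs ->]]].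
have s0 := intr_neq0_of_ndvd hs.
have pE0 : (p ^ E)%:Z != 0 by rewrite eqz_nat expn_eq0 negb_and -lt0n prime_gt0.
have /eqP s_pE : coprimez s (p ^ E)%:Z.
  by rewrite coprimezE /= coprime_sym coprimeXl // prime_coprime.
have [u [v /= uv]] := Bezoutz s (p ^ E)%:Z; rewrite s_pE in uv.
set r := ((z * u) %% (p ^ E)%:Z)%Z.
have r_ge0 : 0 <= r by apply: modz_ge0.
exists `|r|%N; first by rewrite -ltz_nat gez0_abs // ltz_pmod // ltz_nat lt0n -eqz_nat.
(* z/s = z(us + v p^E)/s and zu = q p^E + r *)
exists (z%:~R * v%:~R / s%:~R + ((z * u) %/ (p ^ E)%:Z)%Z%:~R).
  apply: p_integralD; last exact: p_integral_int.
  by exists (z * v), s; rewrite rmorphM.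
have uvR : u%:~R * s%:~R + v%:~R * (p ^ E)%:R = 1 :> rat.
  by rewrite pmulrn -!rmorphM -rmorphD /= uv.
have rR : (`|r|%N)%:R = z%:~R * u%:~R - ((z * u) %/ (p ^ E)%:Z)%Z%:~R * (p ^ E)%:R :> rat.
  rewrite !pmulrn gez0_abs // -!rmorphM -rmorphB /=.
  by congr (_%:~R); apply/eqP; rewrite eq_sym subr_eq addrC -divz_eq.
have -> : z%:~R / s%:~R = z%:~R * (u%:~R * s%:~R + v%:~R * (p ^ E)%:R) / s%:~R :> rat.
  by rewrite uvR mulr1.
by rewrite rR; field.
Qed.

Lemma p_multiple_cancel D : p_integral p D -> D != 0 ->
  exists k, forall e y, p_multiple p (e + k) (D * y) -> p_multiple p e y.
Proof.
move=> [z [s [hs eD]]] D0.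
have s0 := intr_neq0_of_ndvd hs.
have z0 : (0 < `|z|)%N.
  by rewrite absz_gt0; apply: contraNneq D0 => zz; rewrite eD zz mul0r.
have [m cpm em] := pfactor_coprime p_prime z0; set k := logn p `|z| in em.
exists k => e y [t ht ey].
have m0 : m%:R != 0 :> rat.
  by rewrite pnatr_eq0; apply: contraTneq cpm => ->; rewrite /coprime gcdn0; case: eqP p_prime => // ->.
have ez : z%:~R = (-1) ^+ (z < 0)%R * m%:R * (p ^ k)%:R :> rat.
  by rewrite {1}[z]intEsign rmorphM /= em rmorph_sign -pmulrn natrM mulrA.
exists (t * (s%:~R / ((-1) ^+ (z < 0)%R * m%:Z)%:~R)).
  apply: p_integralM => //; exists s, ((-1) ^+ (z < 0)%R * m%:Z); split=> //.
  by rewrite -prime_coprime // abszM abszX /= exp1n mul1n.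
have pk0 : (p ^ k)%:R != 0 :> rat by rewrite pnatr_eq0 expn_eq0 negb_and -lt0n prime_gt0.
have -> : y = (p ^ (e + k))%:R * t / D by rewrite -ey mulrC mulKf.
rewrite eD ez rmorphM /= rmorph_sign -pmulrn expnD natrM.
by field; rewrite signr_eq0 m0 pk0 s0.
Qed.

End PIntegral.

Definition sat_rec (a : seq rat) (s : int -> rat) : Prop :=
  forall n : int, s (n + (size a)%:Z) = \sum_(i < size a) a`_i * s (n + (i : nat)%:Z).

Definition zero_window (s : int -> rat) (d : nat) (n : int) : Prop :=
  forall i : nat, (i < d)%N -> s (n + i%:Z) = 0.

Section SatRec.
Variable a : seq rat.

Lemma sat_rec_shift s (c : int) : sat_rec a s -> sat_rec a (fun n => s (n + c)).
Proof. by move=> hs n /=; rewrite addrAC hs; apply: eq_bigr => i _; rewrite addrAC. Qed.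

Lemma sat_recZ s (c : rat) : sat_rec a s -> sat_rec a (fun n => c * s n).
Proof. by move=> hs n /=; rewrite hs mulr_sumr; apply: eq_bigr => i _; rewrite mulrCA. Qed.

Lemma sat_recB s t : sat_rec a s -> sat_rec a t -> sat_rec a (fun n => s n - t n).
Proof. by move=> hs ht n /=; rewrite hs ht -sumrB; apply: eq_bigr => i _; rewrite mulrBr. Qed.

Lemma sat_rec_lin s m (c : 'I_m -> rat) (f : 'I_m -> int) : sat_rec a s ->
  sat_rec a (fun n => \sum_(k < m) c k * s (n + f k)).
Proof.
move=> hs n /=.
under eq_bigr => k _ do rewrite addrAC hs mulr_sumr.
rewrite exchange_big /=; apply: eq_bigr => i _; rewrite mulr_sumr.
by apply: eq_bigr => k _; rewrite mulrCA addrAC.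
Qed.

Variable s : int -> rat.
Hypothesis s_rec : sat_rec a s.

Lemma zero_window_succ n : zero_window s (size a) n -> zero_window s (size a) (n + 1).
Proof.
move=> hw i hi; case: (ltnP i.+1 (size a)) => [hi1 | hi1].
  by rewrite -(hw _ hi1); congr s; lia.
have -> : n + 1 + i%:Z = n + (size a)%:Z by lia.
by rewrite s_rec big1 // => k _; rewrite hw ?mulr0.
Qed.

Lemma zero_window_pred n : a`_0 != 0 ->
  zero_window s (size a) n -> zero_window s (size a) (n - 1).
Proof.
move=> a0 hw [|i] hi; last by rewrite -(hw i (ltnW hi)); congr s; lia.
have := s_rec (n - 1); case: (size a) hw hi => [//|d] hw _.
rewrite big_ord_recl /= big1 ?addr0 => [|k _].
  rewrite (_ : n - 1 + d.+1%:Z = n + d%:Z) ?hw //; last by lia.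
  by move/esym/eqP; rewrite mulf_eq0 (negbTE a0) => /eqP.
have -> : n - 1 + (lift ord0 k : nat)%:Z = n + (k : nat)%:Z by rewrite lift0; lia.
by rewrite (hw k (leqW (ltn_ord k))) mulr0.
Qed.

Lemma sat_rec_eq0 : a`_0 != 0 -> zero_window s (size a) 0 -> forall n, s n = 0.
Proof.
move=> a0 hw0.
have hw : forall n, zero_window s (size a) n.
  elim/int_rec => // [k | k] hw.
    by rewrite -addn1 PoszD; apply: zero_window_succ.
  by rewrite (_ : - k.+1%:Z = - k%:Z - 1); [apply: zero_window_pred | lia].
have d0 : (0 < size a)%N by rewrite lt0n; apply: contraNneq a0 => /size0nil ->.
by move=> n; rewrite -(addr0 n) (hw n 0%N d0).
Qed.

End SatRec.

Definition lin_relation (c : nat -> rat) (d : nat) (u : int -> rat) : Prop :=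
  forall n : int, \sum_(i < d) c i * u (n + (i : nat)%:Z) = 0.

Lemma rec_of_relation (c : nat -> rat) d u : (0 < d)%N -> c 0%N != 0 -> c d != 0 ->
  lin_relation c d.+1 u -> is_rec u (mkseq (fun i => - c i / c d) d).
Proof.
move=> d0 c0 cd hc; split.
  by rewrite nth_mkseq // mulNr oppr_eq0 mulf_neq0 ?invr_eq0.
move=> n; rewrite size_mkseq.
have := hc n; rewrite big_ord_recr /= => /eqP; rewrite addr_eq0 => /eqP top.
transitivity (- (c d)^-1 * \sum_(i < d) c i * u (n + (i : nat)%:Z)).
  by rewrite top mulrN mulNr opprK mulKf.
by rewrite mulr_sumr; apply: eq_bigr => i _; rewrite nth_mkseq //; field.
Qed.

(* Dropping zero coefficients at either end leaves a relation whose extreme coefficients are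
   nonzero: a recurrence of smaller order, or, for a single term, a zero of u. *)
Lemma relation_shorter_rec d (c : nat -> rat) u :
  (exists2 i, (i < d)%N & c i != 0) -> lin_relation c d u ->
  (exists n, u n = 0) \/ exists2 a, is_rec u a & (size a < d)%N.
Proof.
elim: d c => [|d IH] c [i id ci] hc //.
have [cd0 | cd] := eqVneq (c d) 0.
  have hc' : lin_relation c d u.
    by move=> n; rewrite -[RHS](hc n) big_ord_recr /= cd0 mul0r addr0.
  have ex_i : exists2 j, (j < d)%N & c j != 0.
    exists i => //; rewrite ltn_neqAle -ltnS id andbT.
    by apply: contraNneq ci => ->; rewrite cd0.
  have [[n un] | [a ha sa]] := IH c ex_i hc'; first by left; exists n.
  by right; exists a => //; apply: ltnW.
have [c00 | c0] := eqVneq (c 0%N) 0.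
  case: d IH cd hc {id ci} => [|d] IH cd hc; first by rewrite c00 eqxx in cd.
  have hc' : lin_relation (fun k => c k.+1) d.+1 u.
    move=> n; rewrite -[RHS](hc (n - 1)) [RHS]big_ord_recl /= c00 mul0r add0r.
    by apply: eq_bigr => k _; rewrite /bump /= add1n; congr (_ * u _); lia.
  have [[n un] | [a ha sa]] := IH _ (ex_intro2 _ _ d (ltnSn d) cd) hc'.
    by left; exists n.
  by right; exists a => //; apply: ltnW.
case: d IH cd hc {id ci} => [|d] _ cd hc.
  left; exists 0; have := hc 0; rewrite big_ord1 /= addr0 => /eqP.
  by rewrite mulf_eq0 (negbTE c0) => /eqP.
right; exists (mkseq (fun i => - c i / c d.+1) d.+1); last by rewrite size_mkseq.
exact: rec_of_relation.
Qed.

Lemma exists_min_rec u : LRBS u ->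
  exists2 a, is_rec u a & forall a', is_rec u a' -> (size a <= size a')%N.
Proof.
case=> a0 ha0; move: {2}(size a0).+1 (ltnSn (size a0)) => N.
elim: N a0 ha0 => [//|N IH] a ha lt.
have [[a' ha' lt'] | no_shorter] := classic (exists2 a', is_rec u a' & (size a' < size a)%N).
  by apply: (IH a') => //; exact: leq_trans lt' lt.
exists a => // a' ha'; rewrite leqNgt; apply/negP => lt'.
by apply: no_shorter; exists a'.
Qed.

Definition hankel (u : int -> rat) (d : nat) : 'M[rat]_d :=
  \matrix_(i, j) u ((i : nat)%:Z + (j : nat)%:Z).

Lemma hankel_det_neq0 u a : is_rec u a ->
  (forall a', is_rec u a' -> (size a <= size a')%N) -> (forall n, u n != 0) ->
  \det (hankel u (size a)) != 0.
Proof.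
move=> [a0 ha] amin unz; apply/negP => /det0P [v v0 hv].
pose c (k : nat) := oapp (v 0) 0 (insub k : option 'I_(size a)).
have cv (i : 'I_(size a)) : c i = v 0 i by rewrite /c valK.
have c_ne0 : exists2 i, (i < size a)%N & c i != 0.
  apply: NNPP => hne; apply: (negP v0); apply/eqP/matrixP => i j.
  rewrite mxE (ord1 i); apply: NNPP => vj; apply: hne.
  by exists j; rewrite ?cv; [| apply/eqP].
have hc : lin_relation c (size a) u.
  move=> n; under eq_bigr => i _ do rewrite cv.
  apply: (sat_rec_eq0 (sat_rec_lin (v 0) (fun i => (i : nat)%:Z) ha)) => // j hj.
  have := congr1 (fun M : 'M[rat]_(1, size a) => M 0 (Ordinal hj)) hv.
  rewrite !mxE => E; rewrite -[RHS]E; apply: eq_bigr => i _.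
  by rewrite !mxE add0r addrC.
have [[n /eqP] | [a' ha' lt']] := relation_shorter_rec c_ne0 hc.
  by rewrite (negbTE (unz n)).
by have := amin _ ha'; rewrite leqNgt lt'.
Qed.

Definition periodic_mod (p e : nat) (u : int -> rat) (P : int) : Prop :=
  forall n, p_multiple p e (u (n + P) - u n).

Section Periodicity.
Variable p : nat.
Hypothesis p_prime : prime p.

Lemma congruent_windows (u : int -> rat) d E : (forall n, p_integral p (u n)) ->
  exists i j : nat, (i < j)%N /\
    forall k : nat, (k < d)%N -> p_multiple p E (u (j%:Z + k%:Z) - u (i%:Z + k%:Z)).
Proof.
move=> u_int.
pose residue x r := (r < p ^ E)%N /\ p_multiple p E (x - r%:R).
pose res x := epsilon (inhabits 0%N) (residue x).
have resP x : p_integral p x -> residue x (res x).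
  move=> hx; apply: (epsilon_spec (inhabits 0%N) (residue x)).
  by have [r] := p_integral_residue p_prime E hx; exists r.
pose T := {ffun 'I_d -> 'I_(p ^ E).+1}.
pose f (n : 'I_#|T|.+1) : T := [ffun k : 'I_d => inord (res (u ((n : nat)%:Z + (k : nat)%:Z)))].
have [i [j [fij ij]]] : exists i j, f i = f j /\ (i < j)%N.
  have f_ninj : ~ injective f by move=> /leq_card; rewrite card_ord ltnn.
  apply: NNPP => hne; apply: f_ninj => x y fxy.
  by case: (ltngtP x y) => [lt|gt|/val_inj //]; exfalso; apply: hne; [exists x, y | exists y, x].
exists i, j; split=> // k hk.
have := congr1 (fun g : T => (g (Ordinal hk) : nat)) fij; rewrite /= !ffunE.
have [li mi] := resP _ (u_int (i%:Z + k%:Z)).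
have [lj mj] := resP _ (u_int (j%:Z + k%:Z)).
rewrite !inordK ?ltnS 1?ltnW // => rij.
by have := p_multipleB p_prime mj mi; rewrite rij opprB addrA subrK.
Qed.

(* For c := (v_0, ..., v_(d-1)) adj H, both n |-> sum_l c_l u_(n+l) and det H * v satisfy the
   recurrence and agree on the first window, so they coincide; the former is visibly 0 mod p^E. *)
Lemma hankel_detM_p_multiple a (u v : int -> rat) E : a`_0 != 0 ->
  sat_rec a u -> sat_rec a v -> (forall n, p_integral p (u n)) ->
  (forall k : nat, (k < size a)%N -> p_multiple p E (v k%:Z)) ->
  forall n, p_multiple p E (\det (hankel u (size a)) * v n).
Proof.
move=> a0 u_rec v_rec u_int v_win.
set H := hankel u (size a).
pose x := \row_(k < size a) v (k : nat)%:Z.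
pose c := x *m \adj H.
have cH : c *m H = \det H *: x by rewrite -mulmxA mul_adj_mx mul_mx_scalar.
have c_mul l : p_multiple p E (c 0 l).
  rewrite mxE; apply: (p_multiple_sum p_prime) => k _; apply: (p_multipleM p_prime).
    by rewrite mxE; apply: v_win.
  by apply: (p_integral_adj p_prime) => i j; rewrite mxE.
pose w n := \sum_(l < size a) c 0 l * u (n + (l : nat)%:Z).
have w_eq n : w n = \det H * v n.
  apply/eqP; rewrite -subr_eq0; apply/eqP; move: n.
  apply: (sat_rec_eq0 _ a0); first by apply: sat_recB; [exact: sat_rec_lin | exact: sat_recZ].
  move=> l hl; apply/eqP; rewrite subr_eq0; apply/eqP.
  have := congr1 (fun M : 'M[rat]_(1, size a) => M 0 (Ordinal hl)) cH; rewrite !mxE /= => E1.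
  rewrite add0r -E1; apply: eq_bigr => k _.
  by rewrite !mxE addrC.
move=> n; rewrite -w_eq; apply: (p_multiple_sum p_prime) => l _.
exact: (p_multipleM p_prime).
Qed.

Lemma LRBS_periodic_mod e u : LRBS u -> (forall n, u n != 0) ->
  (forall n, p_integral p (u n)) -> exists2 P : nat, (0 < P)%N & periodic_mod p e u P%:Z.
Proof.
move=> u_LRBS u_neq0 u_int.
have [a a_rec a_min] := exists_min_rec u_LRBS.
have D_neq0 := hankel_det_neq0 a_rec a_min u_neq0.
have D_int : p_integral p (\det (hankel u (size a))).
  by apply: (p_integral_det p_prime) => i j; rewrite mxE.
have [k cancel_D] := p_multiple_cancel p_prime D_int D_neq0.
have [i [j [ij win]]] := congruent_windows (size a) (e + k) u_int.
have [a0 u_rec] := a_rec.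
pose v n := u (n + j%:Z) - u (n + i%:Z).
have v_rec : sat_rec a v by apply: sat_recB; apply: sat_rec_shift.
have v_win (l : nat) : (l < size a)%N -> p_multiple p (e + k) (v l%:Z).
  by move=> hl; rewrite /v !(addrC l%:Z); apply: win.
exists (j - i)%N; first by rewrite subn_gt0.
move=> n; apply: cancel_D.
have -> : u (n + (j - i)%N%:Z) - u n = v (n - i%:Z) by rewrite /v; congr (u _ - u _); lia.
exact: hankel_detM_p_multiple.
Qed.

Lemma periodic_modMz e u (P : int) : periodic_mod p e u P ->
  forall t : int, periodic_mod p e u (P * t).
Proof.
move=> hP.
have hnat (t : nat) : periodic_mod p e u (P * t%:Z).
  elim: t => [|t IH] n; first by rewrite mulr0 addr0 subrr; exact: (p_multiple0 p_prime).
  have -> : u (n + P * t.+1%:Z) - u n =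
      (u (n + P * t%:Z + P) - u (n + P * t%:Z)) + (u (n + P * t%:Z) - u n).
    by rewrite addrA subrK; congr (u _ - _); lia.
  exact: p_multipleD.
case=> t n; first exact: hnat.
have := hnat t.+1 (n + P * Negz t).
rewrite (_ : n + P * Negz t + P * t.+1%:Z = n); last by rewrite NegzE; lia.
by move/(p_multipleN p_prime); rewrite opprB.
Qed.

End Periodicity.

Lemma vp_geW p s S x : (s <= S)%N -> vp_ge p S x -> vp_ge p s x.
Proof. by move=> sS; apply: dvdz_trans; rewrite dvdzE /= dvdn_exp2l. Qed.

Section PadicCompactness.
Variables (p : nat) (w : int -> rat).
Hypothesis p_prime : prime p.

Definition padic_cluster (r : nat) (c : int) : Prop :=
  forall s, exists2 n, vp_ge p s (w n) & ((p ^ r)%:Z %| n - c)%Z.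

Lemma padic_cluster_lift r c : padic_cluster r c ->
  exists c', padic_cluster r.+1 c' /\ ((p ^ r)%:Z %| c' - c)%Z.
Proof.
move=> hc; apply: NNPP => no_lift.
pose c_ (j : nat) := c + (j * p ^ r)%N%:Z.
have [S HS] : exists S, forall j, (j < p)%N ->
    forall n, vp_ge p S (w n) -> ~ ((p ^ r.+1)%:Z %| n - c_ j)%Z.
  apply: common_upper_witness => [j s s' ss' Hs n /(vp_geW ss') | j _]; first exact: Hs.
  apply: NNPP => hj; apply: no_lift; exists (c_ j); split.
    move=> s; apply: NNPP => hs; apply: hj; exists s => n hn hd; apply: hs; by exists n.
  by rewrite /c_ addrAC subrr add0r dvdzE /= dvdn_mull.
have [n hn /dvdzP [t et]] := hc S.
have p0 : p%:Z != 0 by rewrite eqz_nat -lt0n prime_gt0.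
pose j := `|(t %% p%:Z)%Z|%N.
have ej : j%:Z = (t %% p%:Z)%Z by rewrite /j gez0_abs // modz_ge0.
apply: (HS j _ n hn); first by rewrite -ltz_nat ej ltz_pmod // ltz_nat prime_gt0.
(* n - c = t p^r and t = (t div p) p + j *)
apply/dvdzP; exists (t %/ p%:Z)%Z.
rewrite /c_ PoszM ej opprD addrA et {1}(divz_eq t p%:Z) expnS !PoszM.
ring.
Qed.

Definition cluster_lift (c : int) (r : nat) : int :=
  epsilon (inhabits 0) (fun c' => padic_cluster r.+1 c' /\ ((p ^ r)%:Z %| c' - c)%Z).

Fixpoint cluster_seq (r : nat) : int :=
  if r is r'.+1 then cluster_lift (cluster_seq r') r' else 0.

Lemma cluster_seqP : padic_cluster 0 0 ->
  forall r, padic_cluster r (cluster_seq r) /\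
            ((p ^ r)%:Z %| cluster_seq r.+1 - cluster_seq r)%Z.
Proof.
move=> h0.
have liftP r c : padic_cluster r c ->
    padic_cluster r.+1 (cluster_lift c r) /\ ((p ^ r)%:Z %| cluster_lift c r - c)%Z.
  by move/padic_cluster_lift/(epsilon_spec (inhabits 0)).
suff cl r : padic_cluster r (cluster_seq r) by move=> r; split; [| exact: (liftP _ _ (cl r)).2].
by elim: r => // r IH; exact: (liftP _ _ IH).1.
Qed.

Lemma padic_zero_of_cluster : padic_cluster 0 0 -> has_padic_zero p w.
Proof.
move=> h0; have cs := cluster_seqP h0.
exists cluster_seq; split; first by move=> r; case: (cs r).
pose wit r n := vp_ge p r (w n) /\ ((p ^ r)%:Z %| n - cluster_seq r)%Z.
exists (fun r => epsilon (inhabits 0) (wit r)) => r _.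
apply: (epsilon_spec (inhabits 0) (wit r)).
by have [n] := (cs r).1 r; exists n.
Qed.

Lemma vp_bounded_of_no_padic_zero : ~ has_padic_zero p w ->
  exists r, forall n, ~ vp_ge p r (w n).
Proof.
move=> no_zero; apply: NNPP => unbounded; apply/no_zero/padic_zero_of_cluster => s.
apply: NNPP => hs; apply: unbounded; exists s => n hn; apply: hs.
by exists n; rewrite // expn0 dvd1z.
Qed.

End PadicCompactness.

Lemma p_integral_of_in_Zb p b x : prime p -> ~~ (p %| `|b|)%N -> in_Zb b x -> p_integral p x.
Proof.
move=> p_prime pb [m [k ->]]; exists m, (b ^+ k); split; last by rewrite rmorphXn.
by rewrite abszX Euclid_dvdX // negb_and pb.
Qed.

Lemma zero_mod_Zb_of_dvd_numq b m x : b != 0 -> coprime `|b| m -> in_Zb b x ->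
  (m %| `|numq x|)%N -> zero_mod_Zb b m x.
Proof.
move=> b0 bm [z [k ex]] m_num.
have ex' : x = z%:~R / (b ^+ k)%:~R by rewrite rmorphXn.
have den_bk := denq_dvd_of_intr_div (expf_neq0 k b0) ex'.
have e1 : numq x * b ^+ k = z * denq x.
  apply: (@intr_inj rat); rewrite !rmorphM /= numqE ex rmorphXn /=.
  have := denq_neq0 x; rewrite -(intr_eq0 rat) => d0.
  by field; rewrite expf_neq0 // intr_eq0.
have m_den : coprime m `|denq x|.
  by apply: coprime_dvdr den_bk _; rewrite abszX coprimeXr // coprime_sym.
have /dvdzP [q zq] : (m%:Z %| z)%Z.
  have : (m %| `|z| * `|denq x|)%N by rewrite -abszM -e1 abszM dvdn_mulr.
  by rewrite dvdzE Gauss_dvdl.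
exists (q%:~R / b%:~R ^+ k); split; first by exists q, k.
by rewrite ex zq rmorphM /= -pmulrn mulrA [m%:R * _]mulrC.
Qed.

Lemma p_multiple_of_zero_mod_Zb p b m x r : prime p -> ~~ (p %| `|b|)%N ->
  (p ^ r %| m)%N -> zero_mod_Zb b m x -> p_multiple p r x.
Proof.
move=> p_prime pb /dvdnP [m' ->] [y [y_Zb ->]].
exists (m'%:R * y); last by rewrite natrM mulrA [_ * (p ^ r)%:R]mulrC.
by apply: p_integralM => //; [exact: p_integral_nat | exact: p_integral_of_in_Zb y_Zb].
Qed.

Definition modular_obstruction (b : int) (u : int -> rat) : Prop :=
  exists m : nat, (2 <= m)%N /\ coprime `|b|%N m /\ forall n : int, ~ zero_mod_Zb b m (u n).

Definition padic_obstruction (b : int) (u : int -> rat) : Prop :=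
  exists (N : nat) (ps : seq nat), (1 <= N)%N /\
    (forall p, p \in ps -> prime p /\ coprime p `|b|%N) /\
    forall l : nat, (l < N)%N ->
      exists2 p, p \in ps & ~ has_padic_zero p (fun n : int => u (N%:Z * n + l%:Z)).

Lemma modular_obstruction_no_zero b u : modular_obstruction b u -> ~ has_integer_zero u.
Proof.
move=> [m [_ [_ hm]]] [n un0]; apply: (hm n); exists 0; split; last by rewrite un0 mulr0.
by exists 0, 0%N; rewrite mul0r.
Qed.

Lemma padic_obstruction_no_zero b u : padic_obstruction b u -> ~ has_integer_zero u.
Proof.
move=> [N [ps [N1 [_ hl]]]] [n un0].
have [q [l [lN en]]] := int_divn_decomp n N1.
have [p _ []] := hl l lN.
exists (fun=> q); split; first by move=> r; rewrite subrr dvdz0.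
exists (fun=> q) => r _; split; last by rewrite subrr dvdz0.
by rewrite /vp_ge -en un0 dvdz0.
Qed.

Lemma no_padic_zero_of_periodic_mod p e u (N : int) (l : nat) : prime p -> (0 < e)%N ->
  (forall n, p_integral p (u n)) -> periodic_mod p e u N -> ~ vp_ge p e (u l%:Z) ->
  ~ has_padic_zero p (fun n : int => u (N * n + l%:Z)).
Proof.
move=> p_prime e0 u_int uN u_l [_ [_ [n_ /(_ e e0) [/(p_multiple_of_vp_ge (u_int _)) hn _]]]].
apply/u_l/(vp_ge_of_p_multiple p_prime).
have := periodic_modMz p_prime uN (n_ e) l%:Z; rewrite (addrC l%:Z) => hper.
by have := p_multipleB p_prime hn hper; rewrite opprB addrCA subrr addr0.
Qed.

Lemma padic_obstruction_of_modular b u : b != 0 -> LRBS u -> values_in_Zb b u ->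
  ~ has_integer_zero u -> modular_obstruction b u -> padic_obstruction b u.
Proof.
move=> b0 u_LRBS u_Zb u_nz [m [m2 [bm hm]]].
have u_neq0 n : u n != 0 by apply/eqP => un0; apply: u_nz; exists n.
have prime_m p : p \in primes m -> prime p /\ ~~ (p %| `|b|)%N.
  rewrite mem_primes => /and3P [p_prime _ pm]; split => //.
  by rewrite -prime_coprime //; apply: coprime_dvdl pm _; rewrite coprime_sym.
have u_int p : p \in primes m -> forall n, p_integral p (u n).
  by move=> /prime_m [p_prime pb] n; apply: p_integral_of_in_Zb (u_Zb n).
have [N N0 HN] : exists2 N, (0 < N)%N &
    forall p, p \in primes m -> periodic_mod p (logn p m) u N%:Z.
  apply: common_multiple_witness => [p P k /prime_m [p_prime _] hP | p pm].
    by rewrite PoszM; apply: periodic_modMz.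
  have [p_prime _] := prime_m p pm.
  exact: LRBS_periodic_mod u_LRBS u_neq0 (u_int p pm).
exists N, (primes m); split=> //; split.
  by move=> p /prime_m [p_prime pb]; rewrite prime_coprime.
move=> l lN.
have [p pm u_l] : exists2 p, p \in primes m & ~ vp_ge p (logn p m) (u l%:Z).
  apply: NNPP => hne; apply: (hm l%:Z); apply: zero_mod_Zb_of_dvd_numq => //.
  apply/dvdn_partP => [|p pm]; first by apply: leq_trans m2.
  by rewrite p_part; apply: NNPP => hd; apply: hne; exists p.
exists p => //; have [p_prime _] := prime_m p pm.
by apply: no_padic_zero_of_periodic_mod (u_int p pm) (HN p pm) u_l; rewrite // logn_gt0.
Qed.

Lemma modular_obstruction_of_padic b u : values_in_Zb b u ->
  padic_obstruction b u -> modular_obstruction b u.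
Proof.
move=> u_Zb [N [ps [N1 [hps hl]]]].
have [R HR] : exists R, forall l, (l < N)%N ->
    exists2 p, p \in ps & forall n, ~ vp_ge p R (u (N%:Z * n + l%:Z)).
  apply: common_upper_witness => [l r r' rr' [p pin hp] | l lN].
    by exists p => // n /(vp_geW rr'); apply: hp.
  have [p pin hp] := hl l lN; have [p_prime _] := hps p pin.
  by have [r hr] := vp_bounded_of_no_padic_zero p_prime hp; exists r, p.
pose m := (\prod_(p <- ps) p ^ R.+1)%N.
have m_gt0 : (0 < m)%N.
  rewrite /m big_seq_cond prodn_cond_gt0 // => p /andP [pin _].
  by rewrite expn_gt0 prime_gt0 //; case: (hps p pin).
have dvd_m p : p \in ps -> (p ^ R.+1 %| m)%N.
  by move=> pin; rewrite /m (big_rem p pin) /= dvdn_mulr.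
exists m; split; [|split].
- have [p pin _] := HR 0%N N1; have [p_prime _] := hps p pin.
  apply: leq_trans (prime_gt1 p_prime) (leq_trans _ (dvdn_leq m_gt0 (dvd_m p pin))).
  by rewrite expnS leq_pmulr // expn_gt0 prime_gt0.
- rewrite /m big_seq; apply: (big_ind (coprime `|b|)) => [|x y|p pin].
  + exact: coprimen1.
  + by rewrite coprimeMr => ->.
  + by have [_ pb] := hps p pin; rewrite coprimeXr // coprime_sym.
move=> n hz.
have [q [l [lN en]]] := int_divn_decomp n N1.
have [p pin hp] := HR l lN; have [p_prime pb] := hps p pin.
apply: (hp q); rewrite -en; apply: (vp_geW (leqnSn R)).
apply: (vp_ge_of_p_multiple p_prime).
apply: (p_multiple_of_zero_mod_Zb p_prime _ (dvd_m p pin) hz).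
by rewrite -prime_coprime.
Qed.

Theorem mainTheorem6 : Skolem_Conjecture <-> S'.
Proof.
split=> [Skolem | S'_holds] b u b0 u_LRBS u_simple u_Zb; split.
- move=> u_nz; apply: padic_obstruction_of_modular => //.
  exact: (Skolem b u b0 u_LRBS u_simple u_Zb).1.
- exact: padic_obstruction_no_zero.
- move=> u_nz; apply: modular_obstruction_of_padic => //.
  exact: (S'_holds b u b0 u_LRBS u_simple u_Zb).1.
- exact: modular_obstruction_no_zero.
Qed.
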